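(* Let $0<3x_0<L$, $\mu>0$, $\nu\in\mathbb R$, and consider $(r\ddot u)''+\mu(q\dot u)'+pu=\nu$ on $(0,2L)$. (i) If $\mu\neq1$, then $u_\nu(s)=\frac{\nu}{(2-\lambda)(1-\mu)}H(s)^{-1}$ is a solution. (ii) If $\mu=1$, then $u_\nu(s)=\frac{\nu}{2\lambda}\theta(s)(s-L)$ is a solution.
   Context: $\sigma=\pi\sqrt{x_0/(L+x_0)}$, $k=L/\sin\sigma$, $\lambda=\frac{2L}{L+x_0}$, $H(s)=\frac{\pi}{\sigma\sqrt{k^2-(s-L)^2}}$ for $s\in[0,2L]$, $\theta(s)=\int_0^sH(l)\,dl$. Set $r=2/H^3$, $q=2/H$, $p=(2-\lambda)H$; derivatives are with respect to $s$. *)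

From Stdlib Require Import Reals.
From Coquelicot Require Import Coquelicot.
Open Scope R_scope.

Definition sigma (L x0 : R) : R := PI * sqrt (x0 / (L + x0)).
Definition kk (L x0 : R) : R := L / sin (sigma L x0).
Definition lam (L x0 : R) : R := 2 * L / (L + x0).
Definition H (L x0 : R) (s : R) : R :=
  PI / (sigma L x0 * sqrt (kk L x0 ^ 2 - (s - L) ^ 2)).
Definition theta (L x0 : R) (s : R) : R := RInt (H L x0) 0 s.

Definition rcoef (L x0 : R) (s : R) : R := 2 / (H L x0 s ^ 3).
Definition qcoef (L x0 : R) (s : R) : R := 2 / H L x0 s.
Definition pcoef (L x0 : R) (s : R) : R := (2 - lam L x0) * H L x0 s.

Definition is_solution (L x0 mu nu : R) (u : R -> R) : Prop :=
  forall s, 0 < s < 2 * L ->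
    ex_derive u s /\
    ex_derive (Derive u) s /\
    ex_derive (fun t => rcoef L x0 t * Derive_n u 2 t) s /\
    ex_derive (Derive (fun t => rcoef L x0 t * Derive_n u 2 t)) s /\
    ex_derive (fun t => qcoef L x0 t * Derive u t) s /\
    Derive_n (fun t => rcoef L x0 t * Derive_n u 2 t) 2 s
      + mu * Derive (fun t => qcoef L x0 t * Derive u t) s
      + pcoef L x0 s * u s = nu.

From Pilot Require Import Defs.
From Stdlib Require Import Reals.
From Coquelicot Require Import Coquelicot.
Open Scope R_scope.

From Stdlib Require Import Lra Psatz.

(** Write F(s) = sqrt (k^2 - (s - L)^2), the upper half of the circle of
    radius k centred at L, and c = pi / sigma.  Then H = c / F and
    2 - lambda = 2 x0 / (L + x0) = 2 / c^2, so all coefficients are explicit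
    in F.  For u = F the flux r u'' is constant and (q u')' is constant, which
    gives (i).  For u = theta (s - L) the flux r u'' is a quadratic polynomial,
    and the two terms of (q u')' and p u involving theta cancel exactly when
    mu = 1, which gives (ii). *)

Lemma locally_open_interval (a b s : R) :
  a < s < b -> locally s (fun t => a < t < b).
Proof.
  intros hs; apply (locally_open (fun t => a < t /\ t < b)); auto.
  apply open_and; [apply open_gt | apply open_lt].
Qed.

Lemma locally_eq_on_interval (a b s : R) (f g : R -> R) :
  (forall t, a < t < b -> f t = g t) -> a < s < b ->
  locally s (fun t => f t = g t).
Proof.
  intros hfg hs; apply (filter_imp (fun t => a < t < b)); auto.
  now apply locally_open_interval.
Qed.

Lemma is_derive_on_interval_ext (a b : R) (f g : R -> R) (s l : R) :
  (forall t, a < t < b -> f t = g t) -> a < s < b ->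
  is_derive f s l -> is_derive g s l.
Proof. intros hfg hs; apply is_derive_ext_loc, (locally_eq_on_interval a b); auto. Qed.

Lemma Derive_on_interval (a b s : R) (f f' : R -> R) :
  (forall t, a < t < b -> is_derive f t (f' t)) -> a < s < b ->
  locally s (fun t => Derive f t = f' t).
Proof.
  intros hf; apply locally_eq_on_interval; intros t ht.
  now apply is_derive_unique, hf.
Qed.

Lemma is_derive_Rmult (f g : R -> R) (x lf lg : R) :
  is_derive f x lf -> is_derive g x lg ->
  is_derive (fun t => f t * g t) x (lf * g x + f x * lg).
Proof. intros hf hg; apply (is_derive_mult f g); auto; intros; apply Rmult_comm. Qed.

Section SolutionIntro.

Variables (L x0 mu nu : R) (u u1 u2 R R1 R2 Q Q1 : R -> R).
Hypotheses
  (du : forall t, 0 < t < 2 * L -> is_derive u t (u1 t))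
  (du1 : forall t, 0 < t < 2 * L -> is_derive u1 t (u2 t))
  (hR : forall t, 0 < t < 2 * L -> rcoef L x0 t * u2 t = R t)
  (dR : forall t, 0 < t < 2 * L -> is_derive R t (R1 t))
  (dR1 : forall t, 0 < t < 2 * L -> is_derive R1 t (R2 t))
  (hQ : forall t, 0 < t < 2 * L -> qcoef L x0 t * u1 t = Q t)
  (dQ : forall t, 0 < t < 2 * L -> is_derive Q t (Q1 t))
  (balance : forall t, 0 < t < 2 * L -> R2 t + mu * Q1 t + pcoef L x0 t * u t = nu).

Lemma Derive_n2_on_interval t : 0 < t < 2 * L -> Derive_n u 2 t = u2 t.
Proof.
  intros ht; simpl.
  rewrite (Derive_ext_loc _ u1); [now apply is_derive_unique, du1|].
  now apply (Derive_on_interval 0 (2 * L)).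
Qed.

Lemma is_solution_intro : is_solution L x0 mu nu u.
Proof.
  assert (hR' : forall t, 0 < t < 2 * L -> rcoef L x0 t * Derive_n u 2 t = R t).
  { intros t ht; rewrite Derive_n2_on_interval; auto. }
  assert (hQ' : forall t, 0 < t < 2 * L -> qcoef L x0 t * Derive u t = Q t).
  { intros t ht; rewrite (is_derive_unique _ _ _ (du t ht)); auto. }
  assert (dR' : forall t, 0 < t < 2 * L ->
            is_derive (fun t => rcoef L x0 t * Derive_n u 2 t) t (R1 t)).
  { intros t ht; apply (is_derive_on_interval_ext 0 (2 * L) R); auto.
    intros; symmetry; auto. }
  assert (dDR : forall t, 0 < t < 2 * L ->
            is_derive (Derive (fun t => rcoef L x0 t * Derive_n u 2 t)) t (R2 t)).
  { intros t ht; apply (is_derive_on_interval_ext 0 (2 * L) R1); auto.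
    intros; symmetry; now apply is_derive_unique, dR'. }
  assert (dQ' : forall t, 0 < t < 2 * L ->
            is_derive (fun t => qcoef L x0 t * Derive u t) t (Q1 t)).
  { intros t ht; apply (is_derive_on_interval_ext 0 (2 * L) Q); auto.
    intros; symmetry; auto. }
  intros s hs.
  repeat split; try (eexists; eauto; fail).
  - exists (u2 s); apply (is_derive_on_interval_ext 0 (2 * L) u1); auto.
    intros; symmetry; now apply is_derive_unique, du.
  - replace (Derive_n (fun t => rcoef L x0 t * Derive_n u 2 t) 2 s) with (R2 s)
      by (symmetry; exact (is_derive_unique _ _ _ (dDR s hs))).
    replace (Derive (fun t => qcoef L x0 t * Derive u t) s) with (Q1 s)
      by (symmetry; exact (is_derive_unique _ _ _ (dQ' s hs))).
    auto.
Qed.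

End SolutionIntro.

Definition semicircle (k m t : R) : R := sqrt (k ^ 2 - (t - m) ^ 2).

Section Semicircle.

Variables k m t : R.
Hypothesis inside : 0 < k ^ 2 - (t - m) ^ 2.

Lemma semicircle_pos : 0 < semicircle k m t.
Proof. now apply sqrt_lt_R0. Qed.

Lemma semicircle_sqr : semicircle k m t ^ 2 = k ^ 2 - (t - m) ^ 2.
Proof. apply pow2_sqrt; lra. Qed.

Lemma is_derive_semicircle :
  is_derive (semicircle k m) t (- (t - m) / semicircle k m t).
Proof.
  assert (hF := semicircle_pos).
  unfold semicircle in *; auto_derive; [lra|].
  replace (k * (k * 1) + - ((t + - m) * ((t + - m) * 1))) with (k ^ 2 - (t - m) ^ 2) by ring.
  field; lra.
Qed.

Lemma is_derive_inv_semicircle :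
  is_derive (fun t => / semicircle k m t) t ((t - m) / semicircle k m t ^ 3).
Proof.
  assert (hF := semicircle_pos).
  replace ((t - m) / semicircle k m t ^ 3)
    with (- (- (t - m) / semicircle k m t) / semicircle k m t ^ 2) by (field; lra).
  apply is_derive_inv; [apply is_derive_semicircle | lra].
Qed.

Lemma is_derive_slope_semicircle :
  is_derive (fun t => (t - m) / semicircle k m t) t (k ^ 2 / semicircle k m t ^ 3).
Proof.
  assert (hF := semicircle_pos). assert (hF2 := semicircle_sqr).
  replace (k ^ 2 / semicircle k m t ^ 3)
    with (1 * / semicircle k m t + (t - m) * ((t - m) / semicircle k m t ^ 3))
    by (replace (k ^ 2) with (semicircle k m t ^ 2 + (t - m) ^ 2) by lra; field; lra).
  apply (is_derive_mult (fun t => t - m) (fun t => / semicircle k m t));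
    [auto_derive; auto; ring | |].
  - apply is_derive_inv_semicircle.
  - intros; apply Rmult_comm.
Qed.

End Semicircle.

Section Profile.

Variables L x0 : R.
Hypotheses (x0_pos : 0 < 3 * x0) (x0_small : 3 * x0 < L).

(* [sigma] alone would denote Stdlib's [Rsigma.sigma]. *)
Let c := PI / Defs.sigma L x0.
Let k := kk L x0.
Let F := semicircle k L.

Lemma sigma_sqr : Defs.sigma L x0 ^ 2 = PI ^ 2 * (x0 / (L + x0)).
Proof.
  unfold Defs.sigma; rewrite Rpow_mult_distr, pow2_sqrt; [ring|].
  apply Rlt_le, Rdiv_lt_0_compat; lra.
Qed.

Lemma sigma_pos_lt_PI2 : 0 < Defs.sigma L x0 < PI / 2.
Proof.
  assert (hq : 0 < x0 / (L + x0)) by (apply Rdiv_lt_0_compat; lra).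
  assert (hq4 : x0 / (L + x0) < / 4).
  { apply (Rmult_lt_reg_r (L + x0)); [lra|].
    unfold Rdiv; rewrite Rmult_assoc, Rinv_l by lra; lra. }
  assert (hs : 0 < sqrt (x0 / (L + x0))) by (apply sqrt_lt_R0; lra).
  assert (hs2 : sqrt (x0 / (L + x0)) < / 2).
  { rewrite <- (sqrt_pow2 (/ 2)) by lra; apply sqrt_lt_1; lra. }
  assert (hpi := PI_RGT_0).
  unfold Defs.sigma; split; nra.
Qed.

Lemma L_lt_kk : L < k.
Proof.
  destruct sigma_pos_lt_PI2 as [hs0 hs1].
  assert (hsin0 : 0 < sin (Defs.sigma L x0)) by (apply sin_gt_0; lra).
  assert (hsin1 : sin (Defs.sigma L x0) < 1)
    by (rewrite <- sin_PI2; apply sin_increasing_1; lra).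
  unfold k, kk; apply (Rmult_lt_reg_r (sin (Defs.sigma L x0))); [lra|].
  unfold Rdiv; rewrite Rmult_assoc, Rinv_l by lra; nra.
Qed.

Lemma c_neq0 : c <> 0.
Proof.
  destruct sigma_pos_lt_PI2; assert (hpi := PI_RGT_0).
  apply Rgt_not_eq, Rdiv_lt_0_compat; lra.
Qed.

Lemma lam_eq : lam L x0 = 2 - 2 / c ^ 2.
Proof.
  assert (hs := sigma_sqr); destruct sigma_pos_lt_PI2; assert (hpi := PI_RGT_0).
  unfold c, lam; unfold Rdiv at 3; rewrite Rpow_mult_distr, pow_inv, hs.
  field; lra.
Qed.

Lemma inside_semicircle t : 0 <= t <= 2 * L -> 0 < k ^ 2 - (t - L) ^ 2.
Proof. intros ht; assert (hk := L_lt_kk); nra. Qed.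

Lemma H_eq t : H L x0 t = c / F t.
Proof. unfold H, c, F, k, semicircle; unfold Rdiv; rewrite Rinv_mult; ring. Qed.

Lemma is_derive_H t : 0 < k ^ 2 - (t - L) ^ 2 ->
  is_derive (H L x0) t (c * ((t - L) / F t ^ 3)).
Proof.
  intros ht; apply (is_derive_ext (fun t => c * / F t)).
  - intros; rewrite H_eq; reflexivity.
  - now apply is_derive_scal, is_derive_inv_semicircle.
Qed.

Lemma is_derive_theta t : 0 < t < 2 * L -> is_derive (theta L x0) t (H L x0 t).
Proof.
  assert (cH : forall z, 0 <= z < 2 * L -> continuous (H L x0) z).
  { intros z hz; apply (@ex_derive_continuous R_AbsRing R_NormedModule); eexists.
    apply is_derive_H, inside_semicircle; lra. }
  intros ht; apply is_derive_RInt with 0; [|apply cH; lra].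
  apply (filter_imp (fun b => 0 < b < 2 * L)); [|now apply locally_open_interval].
  intros b hb; apply (@RInt_correct R_CompleteNormedModule), ex_RInt_continuous.
  intros z hz; rewrite Rmin_left, Rmax_right in hz by lra; apply cH; lra.
Qed.

Lemma nonresonant_solution mu nu : mu <> 1 ->
  is_solution L x0 mu nu
    (fun s => nu / ((2 - lam L x0) * (1 - mu)) * / H L x0 s).
Proof.
  intros hmu; set (A := nu / ((2 - lam L x0) * (1 - mu))).
  assert (hc := c_neq0); assert (hlam := lam_eq).
  assert (hu : forall t, A / c * F t = A * / H L x0 t).
  { intros t; rewrite H_eq, Rinv_div; unfold Rdiv; ring. }
  apply (is_solution_intro L x0 mu nu _
    (fun t => - (A / c) * ((t - L) / F t))
    (fun t => - (A / c) * (k ^ 2 / F t ^ 3))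
    (fun _ => - 2 * A * k ^ 2 / c ^ 4) (fun _ => 0) (fun _ => 0)
    (fun t => - 2 * A / c ^ 2 * (t - L)) (fun _ => - 2 * A / c ^ 2));
    intros t ht; assert (hin := inside_semicircle t ltac:(lra));
    assert (hF := semicircle_pos _ _ _ hin); fold k F in hF.
  - apply (is_derive_ext (fun t => A / c * F t)).
    + exact hu.
    + replace (- (A / c) * ((t - L) / F t)) with (A / c * (- (t - L) / F t)) by (field; lra).
      now apply is_derive_scal, is_derive_semicircle.
  - now apply is_derive_scal, is_derive_slope_semicircle.
  - unfold rcoef; rewrite H_eq; field; lra.
  - now auto_derive.
  - now auto_derive.
  - unfold qcoef; rewrite H_eq; field; lra.
  - auto_derive; auto; field; auto.
  - unfold pcoef, A; rewrite (H_eq t), hlam, Rinv_div; field; repeat split; lra.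
Qed.

Lemma resonant_solution nu :
  is_solution L x0 1 nu (fun s => nu / (2 * lam L x0) * theta L x0 s * (s - L)).
Proof.
  set (C := nu / (2 * lam L x0)).
  assert (hc := c_neq0); assert (hlam := lam_eq).
  assert (hnu : nu = C * (2 * lam L x0)).
  { unfold C, lam; field; split; lra. }
  assert (dlin : forall t, is_derive (fun s => s - L) t 1) by (intros; auto_derive; auto; ring).
  apply (is_solution_intro L x0 1 nu _
    (fun t => C * (H L x0 t * (t - L) + theta L x0 t))
    (fun t => C * (c * ((t - L) / F t ^ 3) * (t - L) + 2 * H L x0 t))
    (fun t => 2 * C / c ^ 2 * (2 * k ^ 2 - (t - L) ^ 2))
    (fun t => - 4 * C / c ^ 2 * (t - L)) (fun _ => - 4 * C / c ^ 2)
    (fun t => 2 * C * (t - L) + 2 * C / c * (F t * theta L x0 t))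
    (fun t => 2 * C + 2 * C / c * (- (t - L) / F t * theta L x0 t + F t * H L x0 t)));
    intros t ht; assert (hin := inside_semicircle t ltac:(lra));
    assert (hF := semicircle_pos _ _ _ hin); assert (hF2 := semicircle_sqr _ _ _ hin);
    fold k F in hF, hF2.
  - replace (C * (H L x0 t * (t - L) + theta L x0 t))
      with (C * H L x0 t * (t - L) + C * theta L x0 t * 1) by ring.
    apply (is_derive_Rmult (fun s => C * theta L x0 s) (fun s => s - L)); auto.
    now apply is_derive_scal, is_derive_theta.
  - replace (C * (c * ((t - L) / F t ^ 3) * (t - L) + 2 * H L x0 t))
      with (C * (c * ((t - L) / F t ^ 3) * (t - L) + H L x0 t * 1 + H L x0 t)) by ring.
    apply is_derive_scal, (is_derive_plus (fun s => H L x0 s * (s - L)) (theta L x0)).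
    + apply (is_derive_Rmult (H L x0) (fun s => s - L)); auto; now apply is_derive_H.
    + now apply is_derive_theta.
  - unfold rcoef; rewrite (H_eq t).
    replace (k ^ 2) with (F t ^ 2 + (t - L) ^ 2) by lra; field; lra.
  - auto_derive; auto; field; auto.
  - auto_derive; auto; field; auto.
  - unfold qcoef; rewrite (H_eq t); field; lra.
  - apply (is_derive_plus (fun s => 2 * C * (s - L))); [auto_derive; auto; ring|].
    apply is_derive_scal, is_derive_Rmult; [now apply is_derive_semicircle|].
    now apply is_derive_theta.
  - unfold pcoef; rewrite hnu, (H_eq t), hlam; field; lra.
Qed.

End Profile.

Theorem mainTheorem17 (L x0 mu nu : R) :
  0 < 3 * x0 -> 3 * x0 < L -> 0 < mu ->
  (mu <> 1 ->
     is_solution L x0 mu nu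
       (fun s => nu / ((2 - lam L x0) * (1 - mu)) * / H L x0 s)) /\
  (mu = 1 ->
     is_solution L x0 mu nu
       (fun s => nu / (2 * lam L x0) * theta L x0 s * (s - L))).
Proof.
  intros hx0 hL _; split.
  - now apply nonresonant_solution.
  - intros ->; now apply resonant_solution.
Qed.
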